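(* Let $I_n=[0,1]^n$ and let $C(I_n)$ denote the space of continuous real-valued functions on $I_n$. Interpretable Continuous Control Trees (ICCTs), as defined in the context, are dense in $C(I_n)$ with respect to the supremum norm. That is, for every $f\in C(I_n)$ and every $\epsilon>0$ there exists an ICCT $I:\mathbb{R}^n\to\mathbb{R}$ such that $|I(x)-f(x)|<\epsilon$ for all $x\in I_n$.
   Context: An Interpretable Continuous Control Tree (ICCT) with input $x=(x^1,\dots,x^n)\in\mathbb{R}^n$ and scalar output is a binary tree of arbitrary (finite) depth in which every internal (decision) node $i$ carries a coordinate index $k_i\in\{1,\dots,n\}$, a nonzero weight $w_i\in\mathbb{R}$, a threshold $b_i\in\mathbb{R}$ and a steepness $\alpha\neq 0$, and evaluates the crisp (Boolean) test $\mathbbm{1}(\alpha(w_i x^{k_i}-b_i)>0)$; the input is routed to the left child if the test is true and to the right child otherwise, starting from the root, until a leaf is reached. Each leaf $d$ carries an affine controller $l_d(x)=(\vec u_d\circ\vec\beta_d)^T(\vec u_d\circ x)+\vec u_d^T\vec\phi_d$, where $\vec\beta_d,\vec\phi_d\in\mathbb{R}^n$ and $\vec u_d\in\{0,1\}^n$ is a selection vector of active features (the case $\vec u_d=0$ with a constant output, i.e. a static leaf value, is allowed). The output $I(x)$ is the value $l_d(x)$ of the leaf $d$ reached by $x$. Equivalently, $I(x)=\sum_{d} l_d(x)\prod_{\text{nodes on path to }d}(\text{indicator or its complement})$, a sum over leaves of the leaf value times the product of the hard decision outcomes along the path. *)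

From HB Require Import structures.
From mathcomp Require Import all_boot all_order all_algebra.
From mathcomp Require Import all_classical all_reals all_analysis.
Set Implicit Arguments. Unset Strict Implicit. Unset Printing Implicit Defensive.
Import Order.TTheory GRing.Theory Num.Theory.
Local Open Scope ring_scope.

Inductive icct (R : realType) (n : nat) : Type :=
  (* affine leaf controller: beta, phi in R^n, selection vector u in {0,1}^n *)
  | ILeaf of 'rV[R]_n & 'rV[R]_n & ('I_n -> bool)
  (* static leaf (u_d = 0 with a constant output value) *)
  | IConst of R
  (* decision node: feature k, weight w, threshold b, steepness alpha,
     left child (test true), right child (test false) *)
  | INode of 'I_n & R & R & R & icct R n & icct R n.

Arguments ILeaf {R n}. Arguments IConst {R n}. Arguments INode {R n}.

Fixpoint icct_wf (R : realType) (n : nat) (t : icct R n) : Prop :=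
  match t with
  | ILeaf _ _ _ => True
  | IConst _ => True
  | INode _ w _ alpha l r => w != 0 /\ alpha != 0 /\ icct_wf l /\ icct_wf r
  end.

Definition leaf_val (R : realType) (n : nat) (beta phi : 'rV[R]_n)
    (u : 'I_n -> bool) (x : 'rV[R]_n) : R :=
  \sum_(i < n) ((u i)%:R * beta ord0 i) * ((u i)%:R * x ord0 i)
  + \sum_(i < n) (u i)%:R * phi ord0 i.

(* crisp evaluation: route left iff alpha (w x^k - b) > 0 *)
Fixpoint icct_eval (R : realType) (n : nat) (t : icct R n) (x : 'rV[R]_n) : R :=
  match t with
  | ILeaf beta phi u => leaf_val beta phi u x
  | IConst c => c
  | INode k w b alpha l r =>
      if 0 < alpha * (w * x ord0 k - b) then icct_eval l x else icct_eval r x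
  end.

Definition unit_cube (R : realType) (n : nat) : set 'rV[R]_n :=
  [set x | forall i : 'I_n, 0 <= x ord0 i <= 1].
Arguments unit_cube R n : clear implicits.

From HB Require Import structures.
From mathcomp Require Import all_boot all_order all_algebra.
From mathcomp Require Import all_classical all_reals all_analysis.
From mathcomp Require Import lra.
Set Implicit Arguments. Unset Strict Implicit. Unset Printing Implicit Defensive.
Import Order.TTheory GRing.Theory Num.Theory.
Import numFieldNormedType.Exports.
Local Open Scope ring_scope.
Local Open Scope classical_set_scope.

(* Since f is uniformly continuous on the compact cube, it suffices to
   approximate x by a grid point q with 0 <= x_i - q_i <= h for a step h below
   the modulus of continuity. A chain of crisp tests x_k > j h (j = m, ..., 1)
   snaps one coordinate to the grid; nesting one chain per coordinate and
   putting the constant leaf f(q) under every grid point q gives an ICCT whose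
   value at x is f at the grid point just below x. *)

Lemma compact_unif_continuous_within (R : realType) (T U : pseudoMetricType R)
    (K : set T) (f : T -> U) :
  compact K -> {within K, continuous f} ->
  forall eps, 0 < eps -> exists2 d, 0 < d &
    forall x y, K x -> K y -> ball x d y -> ball (f x) eps (f y).
Proof.
move=> /compact_near_coveringP Kc fc eps eps0.
pose close d x := K x -> forall y, K y -> ball x d y -> ball (f x) eps (f y).
have : \forall d \near 0^'+, K `<=` close d.
  apply: Kc => x Kx.
  have /nbhs_ballP[r /= r0 fxr] : \forall t \near within K (nbhs x),
      ball (f x) (eps / 2) (f t).
    by apply: cvg_ball; [exact: (subspace_continuousP K f).1 | lra].
  near=> x' d => Kx' y Ky x'y.
  have xx' : ball x (r / 2) x' by near: x'; apply: nbhsx_ballx; lra.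
  have dr : d <= r / 2 by near: d; apply: nbhs_right_le; lra.
  apply: (@ball_splitr _ _ (f x)); apply: fxr => //.
    by apply: le_ball xx'; lra.
  by apply: ball_split xx' _; exact: le_ball x'y.
move=> Kclose; near (0 : R)^'+ => d.
exists d; first by near: d; exact: nbhs_right_gt.
move=> x y Kx Ky; have : K `<=` close d by near: d; exact: Kclose.
by move=> /(_ x Kx Kx y Ky).
Unshelve. all: by end_near.
Qed.

Lemma rV_ballP (R : realType) n (x y : 'rV[R]_n) r :
  ball x r y <-> 0 < r /\ forall i, `|x ord0 i - y ord0 i| < r.
Proof.
rewrite /ball /= /mx_ball; split=> -[r0 xy]; split=> // i; first exact: xy.
by move=> j; rewrite [i]ord1; exact: xy.
Qed.

Lemma unit_cube_compact (R : realType) n : compact (unit_cube R n).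
Proof.
exact: (@rV_compact _ n (fun=> `[0 : R, 1]%classic) (fun=> @segment_compact R 0 1)).
Qed.

Section GridTree.
Variables (R : realType) (n : nat) (h : R) (m : nat).
Hypothesis h_ge0 : 0 <= h.

Definition set_coord (p : 'rV[R]_n) (k : 'I_n) (v : R) : 'rV[R]_n :=
  \row_i (if i == k then v else p ord0 i).

Fixpoint threshold_chain (k : 'I_n) (j : nat) (cont : R -> icct R n) : icct R n :=
  match j with
  | 0%N => cont 0
  | j'.+1 => INode k 1 (j'.+1%:R * h) 1 (cont (j'.+1%:R * h)) (threshold_chain k j' cont)
  end.

Lemma threshold_chain_wf k j cont :
  (forall v, icct_wf (cont v)) -> icct_wf (threshold_chain k j cont).
Proof. by move=> cont_wf; elim: j => [|j IHj] //=; rewrite oner_neq0. Qed.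

Lemma threshold_chain_eval k j cont (x : 'rV[R]_n) :
  0 <= x ord0 k <= j.+1%:R * h ->
  exists v, [/\ 0 <= v, v <= x ord0 k <= v + h &
    icct_eval (threshold_chain k j cont) x = icct_eval (cont v) x].
Proof.
elim: j => [|j IHj] /= /andP[xk0 xkj].
  by exists 0; rewrite xk0 add0r -[h]mul1r.
rewrite !mul1r subr_gt0; case: ltP => [jx|xj]; last exact/IHj/andP.
exists (j.+1%:R * h); split; [exact: mulr_ge0 | | by []].
by rewrite (ltW jx) (le_trans xkj) // -[j.+2]addn1 natrD mulrDl mul1r.
Qed.

Fixpoint grid_tree (g : 'rV[R]_n -> R) (ks : seq 'I_n) (p : 'rV[R]_n) : icct R n :=
  match ks with
  | [::] => IConst (g p)
  | k :: ks' => threshold_chain k m (fun v => grid_tree g ks' (set_coord p k v))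
  end.

Lemma grid_tree_wf g ks p : icct_wf (grid_tree g ks p).
Proof. by elim: ks p => [|k ks IHks] p //=; apply: threshold_chain_wf. Qed.

Lemma grid_tree_eval g ks p (x : 'rV[R]_n) :
  (forall k, k \in ks -> 0 <= x ord0 k <= m.+1%:R * h) ->
  exists q, [/\ icct_eval (grid_tree g ks p) x = g q,
    forall i, i \in ks -> 0 <= q ord0 i /\ q ord0 i <= x ord0 i <= q ord0 i + h &
    forall i, i \notin ks -> q ord0 i = p ord0 i].
Proof.
elim: ks p => [|k ks IHks] p /= xks; first by exists p.
have [v [v0 vx ->]] := threshold_chain_eval
  (fun v => grid_tree g ks (set_coord p k v)) (xks k (mem_head k ks)).
have [|q [-> q_ks q_out]] := IHks (set_coord p k v).
  by move=> i iks; apply: xks; rewrite in_cons iks orbT.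
exists q; split => // i; rewrite in_cons.
  case/orP => [/eqP ->|]; last exact: q_ks.
  have [/q_ks //|/q_out ->] := boolP (k \in ks).
  by rewrite mxE eqxx.
by rewrite negb_or => /andP[ik /q_out ->]; rewrite mxE (negbTE ik).
Qed.

End GridTree.

Theorem theorem1 (R : realType) (n : nat) (f : 'rV[R]_n -> R)
  (hf : {within unit_cube R n, continuous f}) (eps : R) (heps : 0 < eps) :
  exists t : icct R n, icct_wf t /\
    forall x, unit_cube R n x -> `|icct_eval t x - f x| < eps.
Proof.
have [d d0 f_unif] :=
  compact_unif_continuous_within (@unit_cube_compact R n) hf heps.
pose h := d / 2; pose m := Num.trunc h^-1.
have h0 : 0 < h by rewrite divr_gt0.
have cube_grid x : unit_cube R n x -> forall k, k \in enum 'I_n ->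
    0 <= x ord0 k <= m.+1%:R * h.
  move=> x01 k _; have /andP[-> x1] := x01 k.
  by rewrite (le_trans x1) // -ler_pdivrMr // div1r ltW // truncnS_gt.
exists (grid_tree h m f (enum 'I_n) 0); split; first exact: grid_tree_wf.
move=> x x01; have [q [-> qx _]] := grid_tree_eval (ltW h0) f 0 (cube_grid x x01).
have q_near_x i : 0 <= q ord0 i /\ q ord0 i <= x ord0 i <= q ord0 i + h.
  exact: qx (mem_enum _ i).
apply: f_unif => //.
- move=> i; have [-> /andP[qxi _]] := q_near_x i.
  by have /andP[_ /(le_trans qxi) ->] := x01 i.
- apply/rV_ballP; split=> // i; have [_ /andP[qxi xqi]] := q_near_x i.
  rewrite distrC ger0_norm ?subr_ge0 // ltrBlDl (le_lt_trans xqi) // ltrD2l.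
  by rewrite /h; lra.
Qed.
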